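(* Let $n$ be a positive integer, $0\le m\le\lfloor n/2\rfloor$ and $0\le k\le m$. Let $T_k$ be the Young tableau of shape $(n-k,k)$ whose first row contains $1,\dots,n-k$ and whose second row contains $n-k+1,\dots,n$, and let $R(T_k)\subseteq S_n$ be its row subgroup (permutations of $\{1,\dots,n\}$ preserving each row as a set). Let $\Omega=\{n-m+1,\dots,n\}$ and $\Omega_1=\{n-m+1,\dots,n-k\}$. Given subsets $V\subseteq\{1,\dots,k\}$ and $W\subseteq\Omega_1$, the number of $p\in R(T_k)$ such that $$W=\{\,i\in\Omega\mid p(i)\notin\Omega\cup V\,\}$$ equals $$\binom{n-m-\#V}{\#W}(\#W)!\,\binom{m-k+\#V}{m-k-\#W}(m-k-\#W)!\,k!\,(n-m)!\,.$$
   Context: $\#X$ denotes the cardinality of a finite set $X$. *)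

(* Elements 1..n of the paper are encoded as i : 'I_n with
   paper value (val i).+1. *)
From mathcomp Require Import all_boot all_fingroup.
Set Implicit Arguments. Unset Strict Implicit. Unset Printing Implicit Defensive.

Definition row1 (n k : nat) : {set 'I_n} := [set i : 'I_n | (val i).+1 <= n - k].
Definition row2 (n k : nat) : {set 'I_n} := [set i : 'I_n | n - k + 1 <= (val i).+1].

Definition rowgroup (n k : nat) : {set 'S_n} :=
  [set p : 'S_n | (p @: row1 n k == row1 n k) && (p @: row2 n k == row2 n k)].

Definition Omega (n m : nat) : {set 'I_n} := [set i : 'I_n | n - m + 1 <= (val i).+1].
Definition Omega1 (n m k : nat) : {set 'I_n} :=
  [set i : 'I_n | (n - m + 1 <= (val i).+1) && ((val i).+1 <= n - k)].
Definition firstk (n k : nat) : {set 'I_n} := [set i : 'I_n | 1 <= (val i).+1 <= k].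

From mathcomp Require Import all_boot all_fingroup zify.
Set Implicit Arguments. Unset Strict Implicit. Unset Printing Implicit Defensive.

(* Both conditions on p are pointwise: they say exactly that each p i lies
   in a set [allowed i] depending only on i (row 2 into row 2, W into
   {1..n-m} \ V, Omega_1 \ W into Omega_1 u V, {1..n-m} into row 1).  Place
   the indices block by block: W, then Omega_1 \ W, then {1..n-m}, then row 2.
   All indices of a block share one allowed set, and the allowed set of every
   index placed before is either contained in it or disjoint from it, so the
   block contributes a falling factorial; the four factors are
   (n-m-#V)^_#W, (m-k+#V)^_(m-k-#W), (n-k-(m-k))^_(n-m) = (n-m)! and k!. *)

Lemma card_uniform_fibers (A B : finType) (X : {set A}) (Y : {set B})
    (phi : A -> B) c :
  {in X, forall a, phi a \in Y} ->
  {in Y, forall b, #|[set a in X | phi a == b]| = c} -> #|X| = c * #|Y|.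
Proof.
move=> phiXY fiber_c.
rewrite -sum1_card (partition_big phi (mem Y)) //= mulnC -sum_nat_const.
apply: eq_bigr => b Yb; rewrite -(fiber_c b Yb) -sum1_card.
by apply: eq_bigl => a; rewrite inE.
Qed.

Lemma card_ord_range n a b (X : {set 'I_n}) :
  (forall i : 'I_n, (i \in X) = (a <= i < b)) -> #|X| = minn b n - a.
Proof.
move=> memX; rewrite -sum1_card big_mkcond /=.
rewrite (eq_bigr (fun i : 'I_n => nat_of_bool (a <= i < b))); last first.
  by move=> i _; rewrite memX; case: ifP.
rewrite -(big_mkord xpredT (fun i => nat_of_bool (a <= i < b))).
elim: n {X memX} => [|n IHn]; first by rewrite big_geq //; lia.
by rewrite big_nat_recr //= IHn; case: (leqP a n) => ?; case: (ltnP n b) => ? /=; lia.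
Qed.

Lemma perm_stableE (T : finType) (p : {perm T}) (X : {set T}) :
  (p @: X == X) = [forall i in X, p i \in X].
Proof.
rewrite eqEcard card_imset ?leqnn ?andbT; last exact: perm_inj.
apply/subsetP/forall_inP => [pX i Xi | pX _ /imsetP[i Xi ->]]; last exact: pX.
by apply: pX; apply: imset_f.
Qed.

Section Placements.
Variables (T : finType) (S : T -> {set T}).

(* Fixing the points outside [s] makes each placement a unique finite
   function on all of [T]. *)
Definition placements (s : seq T) : {set {ffun T -> T}} :=
  [set f : {ffun T -> T} | [&& [forall z, (z \notin s) ==> (f z == z)],
                               uniq (map f s) & all (fun z => f z \in S z) s]].

Definition fupd (f : {ffun T -> T}) x y : {ffun T -> T} :=
  [ffun z => if z == x then y else f z].

Lemma fupd_inj f x : injective (fupd f x).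
Proof. by move=> y1 y2 /ffunP /(_ x); rewrite !ffunE eqxx. Qed.

Lemma fupd_notin f x y z : z != x -> fupd f x y z = f z.
Proof. by move=> zx; rewrite ffunE (negbTE zx). Qed.

Lemma map_fupd f x y s : x \notin s -> map (fupd f x y) s = map f s.
Proof.
move=> xs; apply/eq_in_map => z zs; apply: fupd_notin.
by apply: contraNneq xs => <-.
Qed.

Lemma placements_nil : placements [::] = [set [ffun z => z]].
Proof.
apply/setP => f; rewrite !inE /= !andbT; apply/forallP/eqP => [fid | -> z].
  by apply/ffunP => z; rewrite ffunE; apply/eqP; apply: fid.
by rewrite ffunE.
Qed.

Lemma fupd_placements x s f :
  x \notin s -> f \in placements (x :: s) -> fupd f x x \in placements s.
Proof.
move=> xs; rewrite !inE /= map_fupd // => /and3P[/forallP fid /andP[_ uf] /andP[_ fS]].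
apply/and3P; split=> //.
  apply/forallP => z; apply/implyP => zs; rewrite ffunE.
  case: (eqVneq z x) => [-> //| zx].
  by apply: (implyP (fid z)); rewrite inE negb_or zx.
apply/allP => z zs; rewrite fupd_notin; first exact: (allP fS).
by apply: contraNneq xs => <-.
Qed.

Lemma placements_cons_fiber x s g :
  x \notin s -> g \in placements s ->
  [set f in placements (x :: s) | fupd f x x == g] =
  fupd g x @: (S x :\: [set y in map g s]).
Proof.
move=> xs; rewrite inE => /and3P[/forallP gid ug /allP gS].
apply/setP => f; apply/idP/imsetP.
  rewrite !inE /= => /andP[/and3P[_ /andP[fxs _] /andP[fx _]] /eqP <-].
  exists (f x); first by rewrite !inE map_fupd // fxs.
  by apply/ffunP => z; rewrite !ffunE; case: (eqVneq z x) => [-> |].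
move=> [y]; rewrite !inE => /andP[ygs yS] ->.
rewrite /= map_fupd // ffunE eqxx ygs yS ug /= -andbA; apply/and3P; split.
- apply/forallP => z; apply/implyP; rewrite inE negb_or => /andP[zx zs].
  by rewrite fupd_notin //; apply: (implyP (gid z)).
- apply/allP => z zs; rewrite fupd_notin; first exact: gS.
  by apply: contraNneq xs => <-.
- apply/eqP/ffunP => z; rewrite !ffunE; case: (eqVneq z x) => [-> | //].
  by apply/esym/eqP; apply: (implyP (gid x)).
Qed.

Lemma card_placements_cons x s (P : pred T) :
  x \notin s ->
  {in s, forall z, P z -> S z \subset S x} ->
  {in s, forall z, ~~ P z -> [disjoint S z & S x]} ->
  #|placements (x :: s)| = (#|S x| - count P s) * #|placements s|.
Proof.
move=> xs sub dis.
apply: (card_uniform_fibers (phi := fun f => fupd f x x)) => [f|g g_pl].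
  exact: fupd_placements.
rewrite placements_cons_fiber // card_imset; last exact: fupd_inj.
move: g_pl; rewrite inE => /and3P[_ ug /allP gS].
rewrite cardsD; congr (_ - _).
have -> : S x :&: [set y in map g s] = [set y in filter (mem (S x)) (map g s)].
  by apply/setP => y; rewrite !inE mem_filter.
rewrite cardsE (card_uniqP (filter_uniq _ ug)) size_filter count_map.
apply: eq_in_count => z zs /=; case Pz: (P z).
  exact: subsetP (sub z zs Pz) _ (gS z zs).
exact: disjointFr (dis z zs (negbT Pz)) (gS z zs).
Qed.

Lemma card_placements_cat s1 s2 (Q : {set T}) (P : pred T) :
  uniq (s1 ++ s2) -> {in s1, forall x, S x = Q} ->
  {in s2, forall z, P z -> S z \subset Q} ->
  {in s2, forall z, ~~ P z -> [disjoint S z & Q]} ->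
  #|placements (s1 ++ s2)| = (#|Q| - count P s2) ^_ (size s1) * #|placements s2|.
Proof.
elim: s1 => [|x s1 IHs1] /=; first by rewrite mul1n.
rewrite mem_cat negb_or => /andP[/andP[xs1 xs2] u12] SQ sub dis.
have Sx : S x = Q by apply: SQ; apply: mem_head.
have SQ1 : {in s1, forall y, S y = Q} by move=> y ys; apply: SQ; rewrite inE ys orbT.
have s1s2 : {in s2, forall z, z \notin s1}.
  by move: u12; rewrite cat_uniq => /and3P[_ /hasPn s12 _]; apply: s12.
(* Seen from x, the other items of s1 also have allowed set Q. *)
rewrite (card_placements_cons (P := fun z => (z \in s1) || P z)); first last.
- move=> z; rewrite mem_cat Sx negb_or => /orP[-> // | zs2 /andP[_]].
  exact: dis.
- move=> z; rewrite mem_cat Sx => /orP[zs1 _ | zs2]; first by rewrite SQ1.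
  by rewrite (negbTE (s1s2 z zs2)); apply: sub.
- by rewrite mem_cat negb_or xs1.
rewrite IHs1 // ffactnSr Sx count_cat (eq_in_count (a2 := predT)) ?count_predT.
  rewrite (eq_in_count (a1 := fun z => (z \in s1) || P z) (a2 := P)).
    by rewrite addnC subnDA mulnCA mulnA.
  by move=> z /s1s2 /negbTE ->.
by move=> z /= ->.
Qed.

Lemma card_placements_const s (Q : {set T}) :
  uniq s -> {in s, forall x, S x = Q} -> #|placements s| = #|Q| ^_ (size s).
Proof.
move=> us SQ; rewrite -[s]cats0 (card_placements_cat (Q := Q) (P := xpred0)) ?cats0 //.
by rewrite placements_nil cards1 muln1 subn0.
Qed.

Lemma card_perms_placements (s : seq T) :
  perm_eq s (enum T) ->
  #|[set p : {perm T} | [forall i, p i \in S i]]| = #|placements s|.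
Proof.
move=> s_enum.
have s_all z : z \in s by rewrite (perm_mem s_enum) mem_enum.
have ffun_inj : injective (fun p : {perm T} => [ffun i => p i]).
  by move=> p q /ffunP pq; apply/permP => i; have := pq i; rewrite !ffunE.
rewrite -(card_imset _ ffun_inj); apply: eq_card => f; apply/imsetP/idP.
  move=> [p]; rewrite inE => /forallP pS ->; rewrite inE; apply/and3P; split.
  - by apply/forallP => z; rewrite s_all.
  - rewrite (eq_map (g := p)) => [|z]; last by rewrite ffunE.
    by rewrite map_inj_uniq ?(perm_uniq s_enum) ?enum_uniq //; apply: perm_inj.
  - by apply/allP => z _; rewrite ffunE.
rewrite inE => /and3P[_ uf /allP fS].
have f_inj : injective f.
  by apply/injectiveP; rewrite /injectiveb /dinjectiveb -(perm_uniq (perm_map f s_enum)).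
exists (perm f_inj); first by rewrite inE; apply/forallP => i; rewrite permE fS.
by apply/ffunP => i; rewrite ffunE permE.
Qed.

End Placements.

Section Rows.
Variables (n : nat) (i : 'I_n).

Lemma mem_row1 k : (i \in row1 n k) = (i < n - k).
Proof. by rewrite inE. Qed.

Lemma mem_row2 k : (i \in row2 n k) = (n - k <= i).
Proof. by rewrite inE addn1. Qed.

Lemma mem_Omega m : (i \in Omega n m) = (n - m <= i).
Proof. by rewrite inE addn1. Qed.

Lemma mem_Omega1 m k : (i \in Omega1 n m k) = (n - m <= i < n - k).
Proof. by rewrite inE addn1. Qed.

Lemma mem_firstk k : (i \in firstk n k) = (i < k).
Proof. by rewrite inE. Qed.

End Rows.

Definition memE := (mem_row1, mem_row2, mem_Omega, mem_Omega1, mem_firstk).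

Lemma card_row1 n k : #|row1 n k| = n - k.
Proof. by rewrite (@card_ord_range n 0 (n - k)) => [|i]; rewrite ?memE; lia. Qed.

Lemma disjoint_row1_row2 n k : [disjoint row1 n k & row2 n k].
Proof. by apply/pred0P => j /=; rewrite !memE; lia. Qed.

Section RowGroupCount.
Variables (n m k : nat) (V W : {set 'I_n}).
Hypotheses (m_le_half : m <= n./2) (k_le_m : k <= m).
Hypotheses (V_firstk : V \subset firstk n k) (W_Omega1 : W \subset Omega1 n m k).

Let memV j : j \in V -> j < k.
Proof. by move/(subsetP V_firstk); rewrite memE. Qed.

Let memW i : i \in W -> n - m <= i < n - k.
Proof. by move/(subsetP W_Omega1); rewrite memE. Qed.

Let k_le_nm : k <= n - m.
Proof. lia. Qed.

Definition allowed (i : 'I_n) : {set 'I_n} :=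
  if i \in row2 n k then row2 n k
  else if i \in W then ~: Omega n m :\: V
  else if i \in Omega1 n m k then Omega1 n m k :|: V
  else row1 n k.

Lemma mem_allowed i j :
  (j \in allowed i) =
  [&& (i \in row1 n k) ==> (j \in row1 n k), (i \in row2 n k) ==> (j \in row2 n k)
    & (i \in W) == (i \in Omega n m) && (j \notin Omega n m :|: V)].
Proof.
rewrite /allowed !memE.
case iW: (i \in W); [have := memW iW | ];
  case jV: (j \in V); [have := memV jV | | have := memV jV | ];
  repeat case: ifP; rewrite ?(in_setD, in_setU, in_setC, memE) ?jV /=; lia.
Qed.

Lemma rowgroup_conditionE (p : 'S_n) :
  (p \in rowgroup n k) && (W == [set i in Omega n m | p i \notin Omega n m :|: V]) =
  [forall i, p i \in allowed i].
Proof.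
have -> : (W == [set i in Omega n m | p i \notin Omega n m :|: V]) =
          [forall i, (i \in W) == (i \in Omega n m) && (p i \notin Omega n m :|: V)].
  apply/eqP/forallP => [-> i | WE]; first by rewrite inE.
  by apply/setP => i; rewrite inE; apply/eqP.
rewrite inE !perm_stableE -andbA.
apply/and3P/forallP => [[/forall_inP r1 /forall_inP r2 /forallP WE] i | pA].
  by rewrite mem_allowed WE andbT; apply/andP; split; apply/implyP; [apply: r1 | apply: r2].
split; [apply/forall_inP => i | apply/forall_inP => i | apply/forallP => i];
  by have := pA i; rewrite mem_allowed => /and3P[/implyP ? /implyP ? ?].
Qed.

Lemma allowed_row2 i : i \in row2 n k -> allowed i = row2 n k.
Proof. by rewrite /allowed => ->. Qed.

Lemma allowed_OmegaC i : i \in ~: Omega n m -> allowed i = row1 n k.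
Proof.
rewrite in_setC memE => i_OmegaC.
have iW : (i \in W) = false by apply/negbTE/negP => /memW; lia.
by rewrite /allowed iW !memE !ifF //; lia.
Qed.

Lemma allowed_Omega1 i : i \in Omega1 n m k :\: W -> allowed i = Omega1 n m k :|: V.
Proof.
rewrite in_setD => /andP[/negbTE iW iO1].
by rewrite /allowed iW iO1 memE ifF //; move: iO1; rewrite memE; lia.
Qed.

Lemma allowed_W i : i \in W -> allowed i = ~: Omega n m :\: V.
Proof. by move=> iW; rewrite /allowed iW memE; case: ifP => //; have := memW iW; lia. Qed.

Lemma allowed_sub_row1 i : i \notin row2 n k -> allowed i \subset row1 n k.
Proof.
rewrite memE => i_row1; apply/subsetP => j.
by rewrite mem_allowed memE ltnNge i_row1 /= => /and3P[].
Qed.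

Lemma disjoint_OmegaCV_Omega1V : [disjoint ~: Omega n m :\: V & Omega1 n m k :|: V].
Proof.
apply/pred0P => j /=; rewrite in_setD in_setU in_setC !memE.
by case: (j \in V); rewrite ?andbF /=; lia.
Qed.

Lemma card_row2 : #|row2 n k| = k.
Proof.
by rewrite (@card_ord_range n (n - k) n) => [|i]; rewrite ?memE ?ltn_ord ?andbT; lia.
Qed.

Lemma card_OmegaC : #|~: Omega n m| = n - m.
Proof. by rewrite (@card_ord_range n 0 (n - m)) => [|i]; rewrite ?in_setC ?memE; lia. Qed.

Lemma card_Omega1 : #|Omega1 n m k| = m - k.
Proof. by rewrite (@card_ord_range n (n - m) (n - k)) => [|i]; rewrite ?memE; lia. Qed.

Lemma leq_card_W : #|W| <= m - k.
Proof. by rewrite -card_Omega1 subset_leq_card. Qed.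

Lemma card_Omega1W : #|Omega1 n m k :\: W| = m - k - #|W|.
Proof. by rewrite cardsD (setIidPr W_Omega1) card_Omega1. Qed.

Lemma card_OmegaCV : #|~: Omega n m :\: V| = n - m - #|V|.
Proof.
rewrite cardsD (setIidPr _) ?card_OmegaC //.
by apply/subsetP => j /memV; rewrite in_setC memE; lia.
Qed.

Lemma card_Omega1V : #|Omega1 n m k :|: V| = m - k + #|V|.
Proof.
rewrite cardsU card_Omega1 (_ : _ :&: _ = set0) ?cards0 ?subn0 //.
apply/setP => j; rewrite in_setI in_set0 memE.
by apply/negbTE/negP => /andP[? /memV]; lia.
Qed.

Definition block_order : seq 'I_n :=
  enum (row2 n k) ++ enum (~: Omega n m) ++ enum (Omega1 n m k :\: W) ++ enum W.

Lemma mem_block_order i : i \in block_order.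
Proof.
rewrite !mem_cat !mem_enum in_setC in_setD !memE.
by case iW: (i \in W); [have := memW iW | ]; rewrite /=; lia.
Qed.

Lemma uniq_block_order : uniq block_order.
Proof.
apply/card_uniqP; rewrite (eq_card (B := 'I_n)) ?card_ord => [|i]; last first.
  by rewrite mem_block_order.
rewrite !size_cat -!cardE card_row2 card_OmegaC card_Omega1W subnK ?leq_card_W //.
lia.
Qed.

Lemma perm_eq_block_order : perm_eq block_order (enum 'I_n).
Proof.
apply: uniq_perm; rewrite ?uniq_block_order ?enum_uniq // => i.
by rewrite mem_block_order mem_enum.
Qed.

Lemma card_placements_block_order :
  #|placements allowed block_order| =
  (n - m - #|V|) ^_ #|W| * (m - k + #|V|) ^_ (m - k - #|W|) * k`! * (n - m)`!.
Proof.
have u := uniq_block_order; rewrite /block_order in u *.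
have u1 : uniq (enum (~: Omega n m) ++ enum (Omega1 n m k :\: W) ++ enum W).
  by move: u; rewrite cat_uniq => /and3P[_ _ ->].
have u2 : uniq (enum (Omega1 n m k :\: W) ++ enum W).
  by move: u1; rewrite cat_uniq => /and3P[_ _ ->].
have rest_row1 z : z \in enum (~: Omega n m) ++ enum (Omega1 n m k :\: W) ++ enum W ->
    z \notin row2 n k.
  rewrite !mem_cat !mem_enum in_setC in_setD !memE.
  by case zW: (z \in W); [have := memW zW | ]; rewrite /=; lia.
rewrite (card_placements_cat (Q := row2 n k) (P := xpred0)) //; first last.
- move=> z /rest_row1 z_row1 _.
  exact: disjointWl (allowed_sub_row1 z_row1) (disjoint_row1_row2 n k).
- by move=> z; rewrite mem_enum => /allowed_row2.
rewrite (card_placements_cat (Q := row1 n k) (P := predT)) //; first last.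
- by move=> z zs _; apply/allowed_sub_row1/rest_row1; rewrite mem_cat zs orbT.
- by move=> z; rewrite mem_enum => /allowed_OmegaC.
rewrite (card_placements_cat (Q := Omega1 n m k :|: V) (P := xpred0)) //; first last.
- by move=> z; rewrite mem_enum => /allowed_W -> _; apply: disjoint_OmegaCV_Omega1V.
- by move=> z; rewrite mem_enum => /allowed_Omega1.
rewrite (card_placements_const (Q := ~: Omega n m :\: V)) ?enum_uniq //; last first.
  by move=> z; rewrite mem_enum => /allowed_W.
rewrite !count_pred0 count_predT !subn0 size_cat -!cardE card_row2 card_row1.
rewrite card_OmegaC card_Omega1W card_Omega1V card_OmegaCV.
rewrite subnK ?leq_card_W // (_ : n - k - (m - k) = n - m); last lia.
by rewrite !ffactnn mulnA mulnC [_ ^_ _ * _]mulnC !mulnA.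
Qed.

End RowGroupCount.

Theorem lemma4 (n m k : nat) (V W : {set 'I_n}) :
  0 < n -> m <= n./2 -> k <= m ->
  V \subset firstk n k -> W \subset Omega1 n m k ->
  #|[set p in rowgroup n k |
      W == [set i in Omega n m | p i \notin Omega n m :|: V]]| =
  'C(n - m - #|V|, #|W|) * #|W|`! *
  'C(m - k + #|V|, m - k - #|W|) * (m - k - #|W|)`! * k`! * (n - m)`!.
Proof.
move=> _ m_le_half k_le_m V_firstk W_Omega1.
have conditionE := rowgroup_conditionE m_le_half k_le_m V_firstk W_Omega1.
have -> : [set p in rowgroup n k | W == [set i in Omega n m | p i \notin Omega n m :|: V]] =
          [set p : 'S_n | [forall i, p i \in allowed m k V W i]].
  by apply/setP => p; rewrite [LHS]inE conditionE inE.
rewrite (card_perms_placements _ (perm_eq_block_order m_le_half k_le_m V_firstk W_Omega1)).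
rewrite (card_placements_block_order m_le_half k_le_m V_firstk W_Omega1).
by rewrite -!bin_ffact !mulnA.
Qed.
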